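(* Let $a,b$ be integers with $1\le a\le b$. Then there exists a tree $T$ such that $\tau(T)=a$ and $\beta_p(T)=b$.
   Context: Graphs are finite, simple, connected. Two vertices $u,v$ are twins if $N(u)\setminus\{v\}=N(v)\setminus\{u\}$; the twin number $\tau(G)$ is the maximum cardinality of an equivalence class of the twin relation. For a partition $\Pi=\{S_1,\dots,S_k\}$ of $V(G)$, $r(u|\Pi)=(d(u,S_1),\dots,d(u,S_k))$ with $d(u,S)=\min_{w\in S}d(u,w)$; $\Pi$ is locating if $r(u|\Pi)\ne r(v|\Pi)$ for all distinct $u,v$; $\beta_p(G)$ is the minimum size of a locating partition (for the one-vertex graph, $\tau=\beta_p=1$). *)

From mathcomp Require Import all_boot.
Set Implicit Arguments. Unset Strict Implicit. Unset Printing Implicit Defensive.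

Section Graphs.
Variable T : finType.
Variable e : rel T.

Definition simple_graph : Prop := symmetric e /\ irreflexive e.

Definition connected_graph : Prop := 0 < #|T| /\ forall x y : T, connect e x y.

Definition acyclic : Prop :=
  forall s : seq T, uniq s -> 3 <= size s -> ~~ cycle e s.

Definition is_tree : Prop := [/\ simple_graph, connected_graph & acyclic].

Definition nbhd (u : T) : {set T} := [set w | e u w].

Definition twins (u v : T) : bool := (nbhd u :\ v) == (nbhd v :\ u).

Definition twin_number : nat := \max_(u : T) #|[set v | twins u v]|.

Definition walk_of_len (u v : T) (k : nat) : bool :=
  [exists p : k.-tuple T, path e u p && (last u p == v)].

(* distance: the least length of a u-v walk (= #|T| if none exists) *)
Definition dist (u v : T) : nat := find (walk_of_len u v) (iota 0 #|T|).

Definition dist_set (u : T) (S : {set T}) : nat := \big[minn/#|T|]_(w in S) dist u w.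

Definition locating_partition (P : {set {set T}}) : Prop :=
  partition P [set: T] /\
  forall u v : T, u != v -> exists2 S, S \in P & dist_set u S != dist_set v S.

Definition partition_dimension (k : nat) : Prop :=
  (exists2 P, locating_partition P & #|P| = k) /\
  forall P, locating_partition P -> k <= #|P|.

End Graphs.

From mathcomp Require Import all_boot all_order zify.
From Stdlib Require Import Classical.
Set Implicit Arguments. Unset Strict Implicit. Unset Printing Implicit Defensive.
Import Order.TTheory.

(* The witnesses are spiders: a centre carrying a pendant leaves and m pendant
   paths of length two (legs).  For 1 < a + m the leaves form the only
   nontrivial twin class, so the twin number is a.  Exchanging two legs is an
   automorphism, so a locating partition must give distinct legs distinct pairs
   (block of the middle vertex, block of the tip); hence m <= beta^2.  Adding a
   leg raises beta by at most one (the new leg becomes a new block).  Starting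
   from a small spider with beta <= b, beta therefore takes the value b for some
   m.  For a = b = 1 the one-vertex tree works. *)

Lemma find_iota0 (P : pred nat) n k :
  k < n -> P k -> (forall j, j < k -> ~~ P j) -> find P (iota 0 n) = k.
Proof.
move=> lt_kn Pk notP; rewrite -(subnKC (ltnW lt_kn)) iotaD find_cat size_iota.
have -> : has P (iota 0 k) = false.
  by apply/hasP => -[j]; rewrite mem_iota => /andP[_ /notP /negP].
by rewrite -(subnSK lt_kn) /= add0n Pk addn0.
Qed.

Lemma ord_exists n k : k < n -> exists w : 'I_n, (w : nat) = k.
Proof. by move=> lt_kn; exists (Ordinal lt_kn). Qed.

Lemma ex_least (R : nat -> Prop) k : R k -> exists n, R n /\ forall j, R j -> n <= j.
Proof.
elim: k {-2}k (leqnn k) => [|k IHk] n le_nk Rn.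
  by exists n; split=> // j _; move: le_nk; rewrite leqn0 => /eqP->.
case: (classic (exists2 j, j < n & R j)) => [[j lt_jn Rj]|no_less].
  by apply: (IHk j) => //; lia.
exists n; split=> // j Rj; rewrite leqNgt; apply/negP => lt_jn.
by apply: no_less; exists j.
Qed.

(* A discrete intermediate value theorem for the least k with [R n k]. *)
Lemma least_size_attains (R : nat -> nat -> Prop) n0 k0 b :
  R n0 k0 -> k0 <= b -> (forall n k, R n k -> R n.+1 k.+1) ->
  (exists N, forall n k, R n k -> k <= b -> n < N) ->
  exists n, [/\ n0 <= n, R n b & forall k, R n k -> b <= k].
Proof.
move=> R0 le_k0b R_succ [N R_bounded].
pose too_large n := n0 <= n /\ forall k, R n k -> b < k.
have [|n1 [[le_n0n1 large_n1] least_n1]] := @ex_least too_large (maxn n0 N).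
  split=> [|k Rk]; first exact: leq_maxl.
  by rewrite ltnNge; apply/negP => /(R_bounded _ _ Rk); rewrite ltnNge leq_maxr.
have lt_n0n1 : n0 < n1.
  rewrite ltn_neqAle le_n0n1 andbT; apply/eqP => n0E.
  by move: (large_n1 k0); rewrite -n0E ltnNge le_k0b => /(_ R0).
case: n1 le_n0n1 lt_n0n1 large_n1 least_n1 => // n _ le_n0n large_Sn least_Sn.
have [k [Rk le_kb]] : exists k, R n k /\ k <= b.
  apply: NNPP => none; suff /least_Sn : too_large n by rewrite ltnn.
  split=> // k Rk; rewrite ltnNge; apply/negP => le_kb.
  by apply: none; exists k.
have [k' [Rk' least_k']] := ex_least Rk.
have le_bk' : b <= k' by have := large_Sn _ (R_succ _ _ Rk').
have -> : b = k' by apply/eqP; rewrite eqn_leq le_bk' (leq_trans (least_k' _ Rk)).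
by exists n; split.
Qed.

Section Distance.
Variables (T : finType) (e : rel T).
Implicit Types (u v w : T) (S : {set T}).

Lemma dist_le_card u v : dist e u v <= #|T|.
Proof. by rewrite /dist -[X in _ <= X](size_iota 0) find_size. Qed.

Lemma walk_of_len0 u v : walk_of_len e u v 0 = (u == v).
Proof.
apply/existsP/idP => [[p]|/eqP <-]; first by rewrite tuple0.
by exists [tuple]; rewrite /= eqxx.
Qed.

Lemma dist_eq0 u v : (dist e u v == 0) = (u == v).
Proof.
rewrite /dist; have : 0 < #|T| by apply/card_gt0P; exists u.
by case: #|T| => // n _; rewrite /= walk_of_len0; case: (u == v).
Qed.

Lemma dist_refl u : dist e u u = 0.
Proof. by apply/eqP; rewrite dist_eq0. Qed.

Lemma dist_set_le u S w : w \in S -> dist_set e u S <= dist e u w.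
Proof. exact: (@bigmin_le_cond _ nat _ _ _ _ (dist e u)). Qed.

Lemma dist_set_attained u S : S != set0 ->
  exists2 w, w \in S & dist_set e u S = dist e u w.
Proof.
case/set0Pn => w0 w0S.
have [w wS Ew] := eq_bigmin w0 _ (dist e u) w0S (fun w _ => dist_le_card u w).
by exists w.
Qed.

Lemma dist_set_eq u S k : (exists2 w, w \in S & dist e u w = k) ->
  (forall w, w \in S -> k <= dist e u w) -> dist_set e u S = k.
Proof.
move=> [w wS <-] k_min; have S0 : S != set0 by apply/set0Pn; exists w.
have [w' w'S Ew'] := dist_set_attained u S0.
by apply/eqP; rewrite Ew' eqn_leq k_min // -Ew' dist_set_le.
Qed.

Lemma dist_set1 u w : dist_set e u [set w] = dist e u w.
Proof. by apply: dist_set_eq => [|w']; [exists w; rewrite ?inE | rewrite inE => /eqP->]. Qed.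

Lemma dist_set_eq0 u S : (dist_set e u S == 0) = (u \in S).
Proof.
apply/idP/idP => [|uS]; last by rewrite -leqn0 -(dist_refl u) dist_set_le.
case: (eqVneq S set0) => [->|S0].
  by rewrite /dist_set big_set0 => /eqP/card0_eq/(_ u).
by have [w wS ->] := dist_set_attained u S0; rewrite dist_eq0 => /eqP->.
Qed.

Lemma dist_set_isometry (f : T -> T) u S :
  involutive f -> (forall x y, dist e (f x) (f y) = dist e x y) ->
  (forall w, (f w \in S) = (w \in S)) -> dist_set e (f u) S = dist_set e u S.
Proof.
move=> fK f_iso f_S; case: (eqVneq S set0) => [->|S0].
  by rewrite /dist_set !big_set0.
apply: dist_set_eq => [|w wS].
  by have [w wS ->] := dist_set_attained u S0; exists (f w); rewrite ?f_S ?f_iso.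
by rewrite -(fK w) f_iso dist_set_le ?f_S ?fK.
Qed.

Lemma locating_isometry_id P (f : T -> T) :
  locating_partition e P -> involutive f ->
  (forall x y, dist e (f x) (f y) = dist e x y) ->
  (forall S w, S \in P -> (f w \in S) = (w \in S)) -> f =1 id.
Proof.
move=> [_ loc] fK f_iso f_P u; apply/eqP/negPn/negP => /loc [S SP].
by rewrite dist_set_isometry ?eqxx // => w; apply: f_P.
Qed.

End Distance.

Section MetricDistance.
Variables (T : finType) (e : rel T) (F : T -> T -> nat).
Hypothesis F_edge : forall u v, e u v -> F u v = 1.
Hypothesis F_triangle : forall u v w, F u v <= F u w + F w v.
Hypothesis F_refl : forall u, F u u = 0.
Hypothesis F_descent : forall u v, u != v -> exists2 w, e u w & (F w v).+1 = F u v.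
Hypothesis F_lt_card : forall u v, F u v < #|T|.

Lemma metric_le_path u p : path e u p -> F u (last u p) <= size p.
Proof.
elim: p u => [|w p IHp] u /=; first by rewrite F_refl.
case/andP => /F_edge Fuw /IHp; have := F_triangle u (last w p) w; lia.
Qed.

Lemma metric_path k u v : F u v = k ->
  exists p : k.-tuple T, path e u p && (last u p == v).
Proof.
elim: k u => [|k IHk] u Fuv.
  by exists [tuple]; case: (eqVneq u v) => //= /F_descent[w _]; lia.
have /F_descent[w euw Fw] : u != v by apply: contra_eqN Fuv => /eqP->; rewrite F_refl.
have [p /andP[pw lastp]] := IHk w ltac:(lia).
by exists [tuple of w :: p]; rewrite /= euw pw.
Qed.

Lemma dist_metric u v : dist e u v = F u v.
Proof.
apply: find_iota0 => [//||j lt_jF]; first by apply/existsP; apply: metric_path.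
apply/existsP => -[p /andP[/metric_le_path + /eqP lastp]].
by rewrite lastp size_tuple; lia.
Qed.

Lemma connect_metric u v : connect e u v.
Proof.
have [p /andP[pu /eqP <-]] := metric_path (erefl (F u v)).
by apply/connectP; exists p.
Qed.

End MetricDistance.

(* A cycle through a vertex of maximal height would leave it along two edges
   going down or level. *)
Lemma acyclic_of_height (T : finType) (e : rel T) (h : T -> nat) : symmetric e ->
  (forall w u1 u2, e w u1 -> e w u2 -> h u1 <= h w -> h u2 <= h w -> u1 = u2) ->
  acyclic e.
Proof.
move=> esym low s uniq_s size_s; apply/negP => cyc_s.
have [x xs] : exists x, x \in s.
  by case: s size_s {uniq_s cyc_s} => // x s; exists x; rewrite inE eqxx.
case: (arg_maxnP h xs) => w ws hmax.
case/rot_to: ws => i [|u1 [|z t]] rot_s; move: (size_s) (uniq_s) (cyc_s);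
  rewrite -(size_rot i) -(rot_uniq i) -(rot_cycle i) rot_s //= => _.
case/and4P=> _ u1_notin _ _; rewrite rcons_path => /and3P[ewu1 _ /andP[_]].
rewrite esym => elw.
have h_le y : y \in [:: w, u1, z & t] -> h y <= h w by rewrite -rot_s mem_rot => /hmax.
have last_in : last z t \in [:: w, u1, z & t] by do 2 apply: mem_behead; apply: mem_last.
have u1_in : u1 \in [:: w, u1, z & t] by rewrite !inE eqxx orbT.
have u1_last := low w u1 _ ewu1 elw (h_le _ u1_in) (h_le _ last_in).
by move: u1_notin; rewrite u1_last mem_last.
Qed.

Lemma pblock_eq_mem (T : finType) (P : {set {set T}}) x y S :
  partition P [set: T] -> pblock P x = pblock P y -> S \in P -> (x \in S) = (y \in S).
Proof.
move=> partP xy SP; have trivP := partition_trivIset partP.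
have inP z : z \in cover P by rewrite (cover_partition partP) inE.
apply/idP/idP => zS; rewrite -(def_pblock trivP SP zS).
  by rewrite xy mem_pblock.
by rewrite -xy mem_pblock.
Qed.

Section Labelling.
Variables (T : finType) (e : rel T) (k : nat) (lab : T -> 'I_k).
Hypothesis lab_surj : forall i, exists v, lab v = i.

Let P := [set [set v | lab v == i] | i : 'I_k].

Lemma label_partition : partition P [set: T] /\ #|P| = k.
Proof.
have disj : {in predT &, forall i j : 'I_k, j != i ->
    [disjoint [set v | lab v == i] & [set v | lab v == j]]}.
  move=> i j _ _ ji; rewrite -setI_eq0; apply/eqP/setP => v; rewrite !inE.
  by apply/andP => -[/eqP-> /eqP/esym/eqP]; rewrite (negbTE ji).
have nonempty i : predT i -> [set v | lab v == i] != set0.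
  by move=> _; have [v <-] := lab_surj i; apply/set0Pn; exists v; rewrite inE.
have [partP injP] := indexed_partition disj nonempty.
have coverP : cover P = [set: T].
  apply/setP => v; rewrite inE; apply/bigcupP.
  by exists [set w | lab w == lab v]; rewrite ?imset_f ?inE.
by rewrite -coverP card_in_imset ?card_ord // => i j _ _ /injP; apply.
Qed.

Lemma locating_of_labelling :
  (forall u v, u != v -> lab u = lab v ->
     exists i, dist_set e u [set w | lab w == i] != dist_set e v [set w | lab w == i]) ->
  exists2 P, locating_partition e P & #|P| = k.
Proof.
move=> sep; have [partP cardP] := label_partition; exists P => //; split => // u v uv.
case: (eqVneq (lab u) (lab v)) => [/(sep _ _ uv) [i sep_i]|lab_uv].
  by exists [set w | lab w == i]; rewrite ?imset_f.
exists [set w | lab w == lab u]; rewrite ?imset_f //.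
have /eqP-> : dist_set e u [set w | lab w == lab u] == 0 by rewrite dist_set_eq0 inE.
by rewrite eq_sym dist_set_eq0 inE eq_sym.
Qed.

End Labelling.

Lemma twins_adj (T : finType) (e : rel T) u v w :
  twins e u v -> w != u -> w != v -> e u w = e v w.
Proof. by move=> /eqP/setP/(_ w); rewrite !inE => + wu wv; rewrite wu wv. Qed.

Section OneVertex.
Variables (T : finType) (e : rel T).
Hypothesis card_T : #|T| = 1.

Lemma twin_number_card1 : twin_number e = 1.
Proof.
have [x allx] := fintype1 card_T.
rewrite /twin_number (big_pred1 x) => [|y]; last by rewrite (allx y) /= eqxx.
have -> : [set v | twins e x v] = [set: T].
  by apply/setP => v; rewrite (allx v) !inE /twins eqxx.
by rewrite cardsT.
Qed.

Lemma partition_dimension_card1 : partition_dimension e 1.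
Proof.
have [x allx] := fintype1 card_T.
split => [|P [partP _]].
  exists [set [set: T]]; last by rewrite cards1.
  split=> [|u v]; last by rewrite (allx u) (allx v) eqxx.
  rewrite /partition cover1 eqxx trivIset1 /= inE eq_sym.
  by apply/set0Pn; exists x.
rewrite card_gt0; apply/set0Pn.
have : x \in cover P by rewrite (cover_partition partP) inE.
by case/bigcupP => S SP _; exists S.
Qed.

End OneVertex.

Section SpiderMetric.
Variable a : nat.

(* Vertex 0 is the centre, 1..a are the leaves, and a+1+2i, a+2+2i are the
   middle vertex and the tip of the i-th leg.  [leg q] numbers the branch of q
   at the centre (the centre has its own number 0) and [depth q] is its distance
   to the centre. *)
Definition leg q := if q <= a then q else a.+1 + (q - a.+1) %/ 2.
Definition depth q := if q == 0 then 0 else if q <= a then 1 else 1 + (q - a.+1) %% 2.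

Definition sdist u v :=
  if leg u == leg v then (depth u - depth v) + (depth v - depth u) else depth u + depth v.

Lemma vertex_cases q :
  [\/ [/\ q = 0, leg q = 0 & depth q = 0],
      [/\ 0 < q <= a, leg q = q & depth q = 1],
      exists i, [/\ q = a.+1 + 2 * i, leg q = a.+1 + i & depth q = 1] |
      exists i, [/\ q = a.+2 + 2 * i, leg q = a.+1 + i & depth q = 2]].
Proof.
rewrite /leg /depth; case: (posnP q) => [->|q_gt0]; first by constructor 1.
case: leqP => q_a; first by constructor 2.
have [i [qE|qE]] : exists i, q = a.+1 + 2 * i \/ q = a.+2 + 2 * i.
  by exists ((q - a.+1) %/ 2); lia.
- by constructor 3; exists i; split; lia.
- by constructor 4; exists i; split; lia.
Qed.

Lemma leg_depth_centre : leg 0 = 0 /\ depth 0 = 0.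
Proof. by rewrite /leg. Qed.

Lemma leg_mid i : leg (a.+1 + 2 * i) = a.+1 + i.
Proof. by rewrite /leg ifN; lia. Qed.

Lemma depth_mid i : depth (a.+1 + 2 * i) = 1.
Proof. by rewrite /depth !ifN; lia. Qed.

Lemma leg_tip i : leg (a.+2 + 2 * i) = a.+1 + i.
Proof. by rewrite /leg ifN; lia. Qed.

Lemma depth_tip i : depth (a.+2 + 2 * i) = 2.
Proof. by rewrite /depth !ifN; lia. Qed.

Definition leaf q := 0 < q <= a.

Lemma leaf_leg_depth q : leaf q -> leg q = q /\ depth q = 1.
Proof.
by case: (vertex_cases q) => [[? ? ?]|[? ? ?]|[? [? ? ?]]|[? [? ? ?]]] //; rewrite /leaf; lia.
Qed.

Lemma leg_depth_1_2 : 0 < a -> [/\ leg 1 = 1, depth 1 = 1, leg 2 = 2 & depth 2 = 1].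
Proof. by rewrite /leg /depth; case: a => [|[|b]]. Qed.

Lemma sdist_sym u v : sdist u v = sdist v u.
Proof. by rewrite /sdist eq_sym; case: eqP => _; lia. Qed.

Lemma sdist_triangle u v w : sdist u v <= sdist u w + sdist w v.
Proof. by rewrite /sdist; do 3 case: eqP; lia. Qed.

Lemma sdist_refl u : sdist u u = 0.
Proof. by rewrite /sdist eqxx; lia. Qed.

End SpiderMetric.

Local Ltac spider_vertex a q :=
  case: (vertex_cases a q) => [[? ? ?]|[? ? ?]|[? [? ? ?]]|[? [? ? ?]]].
Local Ltac sdist_lia := rewrite /sdist; repeat (case: ifP => /eqP ?); lia.

Section Spider.
Variables a m : nat.

Definition spider_size := (a + 2 * m).+1.
Definition spider : rel 'I_spider_size := fun u v => sdist a u v == 1.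

Local Notation T := 'I_spider_size.

Lemma spider_descent (u v : T) : u != v ->
  exists2 w, spider u w & (sdist a w v).+1 = sdist a u v.
Proof.
move=> /eqP uv; have {}uv : (u : nat) <> v by move/val_inj.
have ult : (u : nat) < (a + 2 * m).+1 := ltn_ord u.
have vlt : (v : nat) < (a + 2 * m).+1 := ltn_ord v.
have [c cE] := @ord_exists spider_size 0 isT.
have [leg0 depth0] := leg_depth_centre a.
rewrite /spider; case: (leg a u =P leg a v) => same_leg.
  by exists v; spider_vertex a u; spider_vertex a v; sdist_lia.
case: (vertex_cases a u) => [[? ? ?]|[? ? ?]|[? [? ? ?]]|[i [uE ? ?]]].
- case: (vertex_cases a v) => [[? ? ?]|[? ? ?]|[? [? ? ?]]|[i [vE ? ?]]]; first lia.
  + by exists v; sdist_lia.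
  + by exists v; sdist_lia.
  + have [w wE] := @ord_exists spider_size (a.+1 + 2 * i) ltac:(rewrite /spider_size; lia).
    by exists w; have := leg_mid a i; have := depth_mid a i; rewrite wE; sdist_lia.
- by exists c; rewrite cE; spider_vertex a v; sdist_lia.
- by exists c; rewrite cE; spider_vertex a v; sdist_lia.
- have [w wE] := @ord_exists spider_size (a.+1 + 2 * i) ltac:(rewrite /spider_size; lia).
  exists w; have := leg_mid a i; have := depth_mid a i; rewrite wE;
    by spider_vertex a v; sdist_lia.
Qed.

Lemma sdist_lt_card (u v : T) : sdist a u v < #|T|.
Proof.
have -> : #|T| = (a + 2 * m).+1 by rewrite card_ord.
have : (u : nat) < (a + 2 * m).+1 := ltn_ord u.
have : (v : nat) < (a + 2 * m).+1 := ltn_ord v.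
by spider_vertex a u; spider_vertex a v; sdist_lia.
Qed.

Lemma spider_dist (u v : T) : dist spider u v = sdist a u v.
Proof.
apply: (dist_metric (F := fun x y : T => sdist a x y)) => [x y /eqP //|x y z|x|x y|x y].
- exact: sdist_triangle.
- exact: sdist_refl.
- exact: spider_descent.
- exact: sdist_lt_card.
Qed.

Lemma spider_tree : is_tree spider.
Proof.
have spider_sym : symmetric spider by move=> x y; rewrite /spider sdist_sym.
split.
- by split=> // x; rewrite /spider sdist_refl.
- split=> [|x y]; first by rewrite card_ord.
  apply: (connect_metric (F := fun x y : T => sdist a x y)) => [z|z z'].
  + exact: sdist_refl.
  + exact: spider_descent.
- apply: (acyclic_of_height (h := fun u : T => depth a u)) => // w u1 u2.
  rewrite /spider => /eqP wu1 /eqP wu2 hu1 hu2; apply: ord_inj; move: wu1 wu2.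
  by spider_vertex a w; spider_vertex a u1; spider_vertex a u2; sdist_lia.
Qed.

Lemma card_leaves : #|[set v : T | leaf a v]| = a.
Proof.
have -> : [set v : T | leaf a v] = [set inord i.+1 | i : 'I_a].
  apply/setP => v; rewrite inE /leaf.
  apply/idP/imsetP => [/andP[v_gt0 v_le_a]|[i _ ->]].
  - have lt_v1_a : (v : nat).-1 < a by lia.
    by exists (Ordinal lt_v1_a) => //; apply: ord_inj; rewrite inordK /=; lia.
  - by rewrite inordK; have := ltn_ord i; rewrite /spider_size; lia.
rewrite card_imset ?card_ord // => i j /(congr1 (@nat_of_ord _)).
rewrite !inordK => [[/ord_inj]//||];
  by have := ltn_ord i; have := ltn_ord j; rewrite /spider_size; lia.
Qed.

Hypothesis a_gt0 : 0 < a.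
Hypothesis a_m_gt1 : 1 < a + m.

(* A non-leaf [u] is told apart from any [v] by a neighbour of one of them. *)
Lemma spider_twin_leaf (u v : T) : u != v -> twins spider u v -> leaf a u.
Proof.
move=> /eqP uv tw; have {}uv : (u : nat) <> v by move/ord_inj.
have adj (w : T) : (w : nat) <> u -> (w : nat) <> v ->
    (sdist a u w == 1) = (sdist a v w == 1).
  by move=> wu wv; apply: twins_adj tw _ _; apply/eqP => /(congr1 val).
have ult : (u : nat) < (a + 2 * m).+1 := ltn_ord u.
have vlt : (v : nat) < (a + 2 * m).+1 := ltn_ord v.
have [l0 d0] := leg_depth_centre a; have [l1 d1 l2 d2] := leg_depth_1_2 a_gt0.
have [w0 w0E] := @ord_exists spider_size 0 isT.
have [w1 w1E] := @ord_exists spider_size 1 ltac:(rewrite /spider_size; lia).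
have [w2 w2E] := @ord_exists spider_size 2 ltac:(rewrite /spider_size; lia).
rewrite /leaf; case: (vertex_cases a u) => [[uE ? ?]|[? ? ?]|[i [uE ? ?]]|[i [uE ? ?]]] //.
- case: (v =P 1 :> nat) => v1.
  + by move: (adj w2); rewrite w2E; spider_vertex a v; sdist_lia.
  + by move: (adj w1); rewrite w1E; spider_vertex a v; sdist_lia.
- have [y yE] := @ord_exists spider_size (a.+2 + 2 * i) ltac:(rewrite /spider_size; lia).
  case: (v =P a.+2 + 2 * i :> nat) => vE.
  + by move: (adj w0); rewrite w0E; spider_vertex a v; sdist_lia.
  + move: (adj y); rewrite yE; have := leg_tip a i; have := depth_tip a i.
    by spider_vertex a v; sdist_lia.
- have [x xE] := @ord_exists spider_size (a.+1 + 2 * i) ltac:(rewrite /spider_size; lia).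
  case: (v =P a.+1 + 2 * i :> nat) => vE.
  + by move: (adj w0); rewrite w0E; spider_vertex a v; sdist_lia.
  case: (v =P 0 :> nat) => v0.
  + by move: (adj w1); rewrite w1E; spider_vertex a v; sdist_lia.
  + move: (adj x); rewrite xE; have := leg_mid a i; have := depth_mid a i.
    by spider_vertex a v; sdist_lia.
Qed.

Lemma spider_twinsE (u v : T) : twins spider u v = (u == v) || (leaf a u && leaf a v).
Proof.
case: (eqVneq u v) => [->|uv] /=; first by rewrite /twins eqxx.
apply/idP/andP => [tw|[lu lv]].
  split; first exact: spider_twin_leaf uv tw.
  by apply: (spider_twin_leaf (v := u)); rewrite 1?eq_sym // /twins eq_sym.
have [[lgu du] [lgv dv]] := (leaf_leg_depth lu, leaf_leg_depth lv).
apply/eqP/setP => w; rewrite !inE -!(inj_eq (@ord_inj _)) /spider.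
have {}uv : (u : nat) != v by rewrite (inj_eq (@ord_inj _)).
by move: uv lu lv; rewrite /leaf; spider_vertex a w; sdist_lia.
Qed.

Lemma twin_class_leaf (u : T) : leaf a u ->
  [set v | twins spider u v] = [set v : T | leaf a v].
Proof.
move=> lu; apply/setP => v; rewrite !inE spider_twinsE lu /=.
by case: eqVneq => // <-; rewrite lu.
Qed.

Lemma spider_twin_number : twin_number spider = a.
Proof.
apply/eqP; rewrite eqn_leq; apply/andP; split.
  apply/bigmax_leqP => u _; case: (boolP (leaf a u)) => [/twin_class_leaf->|lu].
    by rewrite card_leaves.
  have -> : [set v | twins spider u v] = [set u].
    by apply/setP => v; rewrite !inE spider_twinsE (negbTE lu) orbF eq_sym.
  by rewrite cards1.
have [w1 w1E] := @ord_exists spider_size 1 ltac:(rewrite /spider_size; lia).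
have lw1 : leaf a w1 by rewrite /leaf w1E.
by apply: leq_trans (leq_bigmax w1); rewrite twin_class_leaf // card_leaves.
Qed.

End Spider.
Arguments spider : clear implicits.

Definition mid_vertex a m k : 'I_(spider_size a m) := inord (a.+1 + 2 * k).
Definition tip_vertex a m k : 'I_(spider_size a m) := inord (a.+2 + 2 * k).

Lemma mid_vertexE a m k : k < m -> mid_vertex a m k = a.+1 + 2 * k :> nat.
Proof. by move=> lt_km; rewrite inordK // /spider_size; lia. Qed.

Lemma tip_vertexE a m k : k < m -> tip_vertex a m k = a.+2 + 2 * k :> nat.
Proof. by move=> lt_km; rewrite inordK // /spider_size; lia. Qed.

Section SwapLegs.
Variables a i j : nat.
Local Notation mid k := (a.+1 + 2 * k).
Local Notation tip k := (a.+2 + 2 * k).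

Definition swap_legs q :=
  if q == mid i then mid j else if q == mid j then mid i else
  if q == tip i then tip j else if q == tip j then tip i else q.

Definition swap_leg_index l :=
  if l == a.+1 + i then a.+1 + j else if l == a.+1 + j then a.+1 + i else l.

Lemma swap_legs_cases q :
  [\/ q = mid i /\ swap_legs q = mid j, q = mid j /\ swap_legs q = mid i,
      q = tip i /\ swap_legs q = tip j | q = tip j /\ swap_legs q = tip i]
  \/ [/\ q <> mid i, q <> mid j, q <> tip i, q <> tip j & swap_legs q = q].
Proof.
rewrite /swap_legs; case: eqP => [|?]; first by left; constructor 1.
case: eqP => [|?]; first by left; constructor 2.
case: eqP => [|?]; first by left; constructor 3.
by case: eqP => [|?]; [left; constructor 4 | right].
Qed.

Lemma depth_swap_legs q : depth a (swap_legs q) = depth a q.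
Proof.
by rewrite /swap_legs; do 4 (case: ifP => [/eqP->|_]; rewrite ?depth_mid ?depth_tip //).
Qed.

Lemma swap_leg_index_inj : injective swap_leg_index.
Proof. by move=> l l'; rewrite /swap_leg_index; repeat (case: ifP => /eqP ?); lia. Qed.

Hypothesis neq_ij : i <> j.

Lemma swap_legsK : involutive swap_legs.
Proof.
move=> q; have := swap_legs_cases (swap_legs q).
by case: (swap_legs_cases q) => [[[? ?]|[? ?]|[? ?]|[? ?]]|[? ? ? ? ?]];
  case=> [[[? ?]|[? ?]|[? ?]|[? ?]]|[? ? ? ? ?]]; lia.
Qed.

Lemma leg_swap_legs q : leg a (swap_legs q) = swap_leg_index (leg a q).
Proof.
case: (swap_legs_cases q) => [[[-> ->]|[-> ->]|[-> ->]|[-> ->]]|[? ? ? ? ->]];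
  rewrite /swap_leg_index ?leg_mid ?leg_tip; repeat (case: ifP => /eqP ?); try lia;
  by spider_vertex a q; lia.
Qed.

Lemma sdist_swap_legs u w : sdist a (swap_legs u) (swap_legs w) = sdist a u w.
Proof. by rewrite /sdist !depth_swap_legs !leg_swap_legs (inj_eq swap_leg_index_inj). Qed.

End SwapLegs.

Section SwapVertex.
Variables a m i j : nat.
Hypotheses (lt_im : i < m) (lt_jm : j < m).
Local Notation T := 'I_(spider_size a m).

Lemma swap_legs_lt q : q < spider_size a m -> swap_legs a i j q < spider_size a m.
Proof.
rewrite /spider_size.
by case: (swap_legs_cases a i j q) => [[[_ ->]|[_ ->]|[_ ->]|[_ ->]]|[_ _ _ _ ->]]; lia.
Qed.

Definition swap_vertex (w : T) : T := inord (swap_legs a i j w).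

Lemma swap_vertexE (w : T) : swap_vertex w = swap_legs a i j w :> nat.
Proof. by rewrite inordK // swap_legs_lt. Qed.

Lemma swap_vertex_mid : swap_vertex (mid_vertex a m i) = mid_vertex a m j.
Proof. by apply: ord_inj; rewrite swap_vertexE !mid_vertexE // /swap_legs eqxx. Qed.

Lemma swap_vertex_cases (w : T) :
  [\/ w = mid_vertex a m i /\ swap_vertex w = mid_vertex a m j,
      w = mid_vertex a m j /\ swap_vertex w = mid_vertex a m i,
      w = tip_vertex a m i /\ swap_vertex w = tip_vertex a m j |
      w = tip_vertex a m j /\ swap_vertex w = tip_vertex a m i] \/ swap_vertex w = w.
Proof.
case: (swap_legs_cases a i j w) => [[[wE swE]|[wE swE]|[wE swE]|[wE swE]]|[_ _ _ _ swE]];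
  rewrite -swap_vertexE in swE; [left; constructor 1|left; constructor 2|
  left; constructor 3|left; constructor 4|right]; try split;
  by apply: ord_inj; rewrite ?mid_vertexE ?tip_vertexE.
Qed.

Hypothesis neq_ij : i <> j.

Lemma swap_vertexK : involutive swap_vertex.
Proof. by move=> w; apply: ord_inj; rewrite !swap_vertexE (swap_legsK a neq_ij). Qed.

Lemma dist_swap_vertex x y :
  dist (spider a m) (swap_vertex x) (swap_vertex y) = dist (spider a m) x y.
Proof. by rewrite !spider_dist !swap_vertexE (sdist_swap_legs a neq_ij). Qed.

End SwapVertex.

Lemma spider_locating_card a m P :
  locating_partition (spider a m) P -> m <= #|P| * #|P|.
Proof.
move=> locP; have partP := locP.1.
pose blocks (k : 'I_m) := (pblock P (mid_vertex a m k), pblock P (tip_vertex a m k)).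
suff blocks_inj : injective blocks.
  have sub : [set blocks k | k : 'I_m] \subset setX P P.
    by apply/subsetP => _ /imsetP[k _ ->]; rewrite inE !pblock_mem ?(cover_partition partP).
  by rewrite -cardsX; have := subset_leq_card sub; rewrite card_imset // card_ord.
move=> i j [same_mid same_tip]; apply/eqP/negP.
move=> /negP/eqP/(contra_not (@ord_inj _ _ _)) neq_ij.
have lt_im := ltn_ord i; have lt_jm := ltn_ord j.
have swap_block S w : S \in P -> (swap_vertex i j w \in S) = (w \in S).
  move=> SP; apply: pblock_eq_mem partP _ SP.
  case: (swap_vertex_cases lt_im lt_jm w) => [[[->->]|[->->]|[->->]|[->->]]|-> //];
    by rewrite ?same_mid ?same_tip.
have := locating_isometry_id locP (swap_vertexK lt_im lt_jm neq_ij)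
  (dist_swap_vertex lt_im lt_jm neq_ij) (fun S w => @swap_block S w) (mid_vertex a m i).
rewrite swap_vertex_mid // => /(congr1 (@nat_of_ord _)).
by rewrite !mid_vertexE //; lia.
Qed.

Section AddLeg.
Variables a m : nat.
Local Notation T := 'I_(spider_size a m).
Local Notation T' := 'I_(spider_size a m.+1).
Local Notation G := (spider a m).
Local Notation G' := (spider a m.+1).
Local Notation new_mid := (mid_vertex a m.+1 m).
Local Notation new_tip := (tip_vertex a m.+1 m).

Lemma spider_size_leS : spider_size a m <= spider_size a m.+1.
Proof. by rewrite /spider_size; lia. Qed.

Definition widen_vertex : T -> T' := widen_ord spider_size_leS.

Lemma widen_vertex_inj : injective widen_vertex.
Proof. by move=> u v /(congr1 (@nat_of_ord _)) uv; apply: ord_inj. Qed.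

Lemma dist_widen_vertex u v : dist G' (widen_vertex u) (widen_vertex v) = dist G u v.
Proof. by rewrite !spider_dist. Qed.

Lemma dist_set_widen_vertex u (S : {set T}) : S != set0 ->
  dist_set G' (widen_vertex u) (widen_vertex @: S) = dist_set G u S.
Proof.
move=> S0; apply: dist_set_eq => [|_ /imsetP[w wS ->]].
  have [w wS ->] := dist_set_attained G u S0.
  by exists (widen_vertex w); rewrite ?imset_f ?dist_widen_vertex.
by rewrite dist_widen_vertex dist_set_le.
Qed.

Lemma new_vertexE : new_mid = a.+1 + 2 * m :> nat /\ new_tip = a.+2 + 2 * m :> nat.
Proof. by rewrite mid_vertexE ?tip_vertexE. Qed.

Lemma widened_spider_cases (v : T') :
  [\/ exists u, v = widen_vertex u, v = new_mid | v = new_tip].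
Proof.
have [midE tipE] := new_vertexE; have lt_v : (v : nat) < (a + 2 * m.+1).+1 := ltn_ord v.
case: (ltnP v (spider_size a m)) => [lt_v_old|le_v].
  by constructor 1; exists (Ordinal lt_v_old); apply: ord_inj.
have {}le_v : (a + 2 * m).+1 <= v := le_v.
case: (v =P a.+1 + 2 * m :> nat) => [vE|vE].
  by constructor 2; apply: ord_inj; rewrite midE.
by constructor 3; apply: ord_inj; rewrite tipE; lia.
Qed.

Lemma widen_vertex_neq_new u : widen_vertex u != new_mid /\ widen_vertex u != new_tip.
Proof.
have [midE tipE] := new_vertexE; have lt_u : (u : nat) < (a + 2 * m).+1 := ltn_ord u.
by split; apply/eqP => /(congr1 (@nat_of_ord _)) /=; rewrite ?midE ?tipE; lia.
Qed.

Lemma dist_set_new_mid_lt_tip (S : {set T}) : S != set0 ->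
  dist_set G' new_mid (widen_vertex @: S) < dist_set G' new_tip (widen_vertex @: S).
Proof.
have [midE tipE] := new_vertexE.
move=> /set0Pn[w0 w0S]; have S'0 : widen_vertex @: S != set0.
  by apply/set0Pn; exists (widen_vertex w0); rewrite imset_f.
have [_ /imsetP[w wS ->] ->] := dist_set_attained G' new_tip S'0.
apply: leq_ltn_trans (dist_set_le G' new_mid (imset_f widen_vertex wS)) _.
have lt_w : (w : nat) < (a + 2 * m).+1 := ltn_ord w.
rewrite !spider_dist midE tipE /= /sdist leg_mid leg_tip depth_mid depth_tip.
by spider_vertex a w; repeat (case: ifP => /eqP ?); lia.
Qed.

Definition add_leg (P : {set {set T}}) : {set {set T'}} :=
  [set new_mid; new_tip] |: [set widen_vertex @: S | S : {set T} in P].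

Lemma card_add_leg P : #|add_leg P| = #|P|.+1.
Proof.
have new_block_notin : [set new_mid; new_tip] \notin [set widen_vertex @: S | S : {set T} in P].
  apply/negP => /imsetP[S _ /setP/(_ new_mid)]; rewrite !inE eqxx /=.
  by case/esym/imsetP => u _ /eqP; rewrite eq_sym (negbTE (widen_vertex_neq_new u).1).
rewrite cardsU1 new_block_notin card_imset //.
by apply: imset_inj; apply: widen_vertex_inj.
Qed.

Lemma add_leg_partition P : partition P [set: T] -> partition (add_leg P) [set: T'].
Proof.
move=> partP.
have partP' : partition [set widen_vertex @: S | S : {set T} in P] (widen_vertex @: [set: T]).
  by rewrite imset_partition //; apply: widen_vertex_inj.
have disj : [disjoint [set new_mid; new_tip] & widen_vertex @: [set: T]].
  rewrite -setI_eq0; apply/eqP/setP => v; rewrite !inE.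
  apply/andP => -[/orP[]/eqP-> /imsetP[u _ /esym/eqP]];
    by have [/negbTE n1 /negbTE n2] := widen_vertex_neq_new u; rewrite ?n1 ?n2.
have cover : [set new_mid; new_tip] :|: widen_vertex @: [set: T] = [set: T'].
  apply/setP => v; rewrite !inE; case: (widened_spider_cases v) => [[u ->]|->|->];
    by rewrite ?eqxx ?orbT // imset_f ?orbT.
rewrite -cover; apply: partitionU1 partP' _ disj.
by apply/set0Pn; exists new_mid; rewrite !inE eqxx.
Qed.

Lemma add_leg_locating P : locating_partition G P -> locating_partition G' (add_leg P).
Proof.
move=> [partP loc]; split; first exact: add_leg_partition.
set B := [set new_mid; new_tip].
have BP : B \in add_leg P by rewrite setU11.
have oldP S : S \in P -> widen_vertex @: S \in add_leg P by move=> SP; rewrite setU1r ?imset_f.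
have sep_new x y : x \in B -> x != y ->
    exists2 S, S \in add_leg P & dist_set G' x S != dist_set G' y S.
  move=> xB xy; case: (boolP (y \in B)) => yB; last first.
    exists B => //; have /eqP-> : dist_set G' x B == 0 by rewrite dist_set_eq0.
    by rewrite eq_sym dist_set_eq0.
  have [c _] := @ord_exists (spider_size a m) 0 isT.
  have cP : pblock P c \in P by rewrite pblock_mem // (cover_partition partP).
  have lt_mid_tip := dist_set_new_mid_lt_tip (partition_neq0 partP cP).
  exists (widen_vertex @: pblock P c); first exact: oldP.
  move: xB yB xy; rewrite !inE => /orP[]/eqP-> /orP[]/eqP->; rewrite ?eqxx // => _.
  - by rewrite ltn_eqF.
  - by rewrite gtn_eqF.
move=> u v uv; case: (boolP (u \in B)) => uB; first exact: sep_new.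
case: (boolP (v \in B)) => vB.
  have vu : v != u by rewrite eq_sym.
  by have [S SP sepS] := sep_new v u vB vu; exists S; rewrite // eq_sym.
have old x : x \notin B -> exists x0, x = widen_vertex x0.
  by case: (widened_spider_cases x) => [//|->|->]; rewrite !inE eqxx ?orbT.
have [[u0 uE] [v0 vE]] := (old u uB, old v vB); subst u v.
have [S SP sepS] : exists2 S, S \in P & dist_set G u0 S != dist_set G v0 S.
  by apply: loc; apply: contraNneq uv => ->.
exists (widen_vertex @: S); first exact: oldP.
by rewrite !dist_set_widen_vertex // (partition_neq0 partP SP).
Qed.

End AddLeg.

(* Blocks {0, 1}, {2}, ..., {a}: the centre and leaf 1 differ in distance to 2. *)
Lemma star_locating a : 1 < a -> exists2 P, locating_partition (spider a 0) P & #|P| = a.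
Proof.
case: a => [|[|c]] // _.
pose lab (v : 'I_(spider_size c.+2 0)) : 'I_c.+2 := inord v.-1.
have labE v : lab v = v.-1 :> nat.
  by rewrite inordK //; have := ltn_ord v; rewrite /spider_size; lia.
apply: (locating_of_labelling (lab := lab)) => [i|u v uv same_lab].
  have lt_i : i.+1 < spider_size c.+2 0 by rewrite /spider_size; have := ltn_ord i; lia.
  by exists (Ordinal lt_i); apply: ord_inj; rewrite labE.
have [w2 w2E] := @ord_exists (spider_size c.+2 0) 2 ltac:(rewrite /spider_size; lia).
exists (inord 1); have -> : [set w | lab w == inord 1] = [set w2].
  apply/setP => w; rewrite !inE -!(inj_eq (@ord_inj _)) labE w2E inordK //.
  by have := ltn_ord w; rewrite /spider_size; case: (w : nat) => [|[|[|]]].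
rewrite !dist_set1 !spider_dist w2E.
have := congr1 (@nat_of_ord _) same_lab; rewrite !labE.
move: uv; rewrite -(inj_eq (@ord_inj _)).
have := ltn_ord u; have := ltn_ord v; rewrite /spider_size.
by case: (u : nat) (v : nat) => [|[|x]] [|[|y]] //=; lia.
Qed.

(* The path 1 - 0 - 2 - 3 with blocks {1} and {0, 2, 3}. *)
Lemma path4_locating : exists2 P, locating_partition (spider 1 1) P & #|P| = 2.
Proof.
pose lab (v : 'I_(spider_size 1 1)) : 'I_2 := inord ((v : nat) != 1).
have labE v : lab v = ((v : nat) != 1) :> nat by rewrite inordK //; case: (_ != _).
have [w1 w1E] := @ord_exists (spider_size 1 1) 1 isT.
apply: (locating_of_labelling (lab := lab)) => [i|u v uv same_lab].
  have [w0 w0E] := @ord_exists (spider_size 1 1) 0 isT.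
  case: i => -[|[|//]] lt_i; [exists w1 | exists w0];
    by apply: ord_inj; rewrite labE ?w0E ?w1E.
exists (inord 0); have -> : [set w | lab w == inord 0] = [set w1].
  apply/setP => w; rewrite !inE -!(inj_eq (@ord_inj _)) labE w1E inordK //.
  by case: (w : nat) => [|[|]].
rewrite !dist_set1 !spider_dist w1E.
have := congr1 (@nat_of_ord _) same_lab; rewrite !labE.
move: uv; rewrite -(inj_eq (@ord_inj _)).
have := ltn_ord u; have := ltn_ord v; rewrite /spider_size.
by case: (u : nat) (v : nat) => [|[|[|[|x]]]] [|[|[|[|y]]]] //=; lia.
Qed.

Theorem theorem8 (a b : nat) : 1 <= a <= b ->
  exists (n : nat) (e : rel 'I_n),
    is_tree e /\ twin_number e = a /\ partition_dimension e b.
Proof.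
move=> /andP[a_gt0 le_ab]; have [le_b1|lt_1b] := leqP b 1.
  have [-> ->] : a = 1 /\ b = 1 by lia.
  exists (spider_size 0 0), (spider 0 0); split; first exact: spider_tree.
  by split; [apply: twin_number_card1 | apply: partition_dimension_card1]; rewrite card_ord.
pose R m k := exists2 P, locating_partition (spider a m) P & #|P| = k.
have [m0 [k0 [R0 le_k0b lt_1am0]]] : exists m0 k0, [/\ R m0 k0, k0 <= b & 1 < a + m0].
  case: (ltngtP a 1) => [|lt_1a|a1]; first lia.
  - by exists 0, a; split=> //; [exact: star_locating | lia].
  - by exists 1, 2; rewrite /R a1; split=> //; exact: path4_locating.
have R_succ n k : R n k -> R n.+1 k.+1.
  by case=> P locP <-; exists (add_leg P); [exact: add_leg_locating | exact: card_add_leg].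
have R_bounded : exists N, forall n k, R n k -> k <= b -> n < N.
  exists (b * b).+1 => n k [P locP <-] le_kb.
  by rewrite ltnS (leq_trans (spider_locating_card locP)) ?leq_mul.
have [m [le_m0m [P locP cardP] least_m]] := least_size_attains R0 le_k0b R_succ R_bounded.
exists (spider_size a m), (spider a m); split; first exact: spider_tree.
split; first by apply: spider_twin_number; lia.
by split=> [|Q locQ]; [exists P | apply: least_m; exists Q].
Qed.
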